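(* Let $T$ be a continuous Archimedean $t$-norm and $A$ a fuzzy interval in $\mathbb R$. For $n\ge1$ let $A_n=Ave_*(A,\dots,A)$ ($n$ arguments), i.e. $A_n(z)=\sup\{T(A(x_1),\dots,A(x_n)) : \frac1n\sum_{j=1}^n x_j=z\}$. Then $(A_n)_{n\ge1}$ converges levelwise to the crisp fuzzy set $\mathbf 1_{\mathbb M A}$, i.e. for every $\alpha\in(0,1]$, $A_n^\alpha\to\mathbb M A$ in the Hausdorff metric.
   Context: A $t$-norm is a commutative, associative map $T:[0,1]^2\to[0,1]$, non-decreasing in each variable, with neutral element $1$, extended to finitely many arguments by associativity. A continuous $t$-norm is Archimedean if for all $x,y\in(0,1)$ there is $n$ with $T(x,\dots,x)$ ($n$ arguments) $<y$. A fuzzy interval in $\mathbb R$ is a map $A:\mathbb R\to[0,1]$ attaining $1$ whose $\alpha$-cuts $A^\alpha=\{A\ge\alpha\}$, $\alpha\in(0,1]$, are nonempty compact intervals; $\mathbb M A=A^1$. Levelwise convergence means convergence of every $\alpha$-cut, $\alpha\in(0,1]$, in the Hausdorff metric on nonempty compact subsets of $\mathbb R$. *)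

From Stdlib Require Import Reals Lra List.
Import ListNotations.
Open Scope R_scope.

Definition unit_int (x : R) : Prop := 0 <= x <= 1.

Definition is_tnorm (T : R -> R -> R) : Prop :=
  (forall x y, unit_int x -> unit_int y -> unit_int (T x y)) /\
  (forall x y, unit_int x -> unit_int y -> T x y = T y x) /\
  (forall x y z, unit_int x -> unit_int y -> unit_int z ->
       T x (T y z) = T (T x y) z) /\
  (forall x x' y, unit_int x -> unit_int x' -> unit_int y ->
       x <= x' -> T x y <= T x' y) /\
  (forall x, unit_int x -> T x 1 = x).

Definition tnorm_continuous (T : R -> R -> R) : Prop :=
  forall x y, unit_int x -> unit_int y ->
  forall eps, 0 < eps -> exists delta, 0 < delta /\
    forall x' y', unit_int x' -> unit_int y' ->
      Rabs (x - x') < delta -> Rabs (y - y') < delta ->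
      Rabs (T x y - T x' y') < eps.

(* n-ary extension by associativity: T(a1,...,an) = T a1 (T a2 (... (T an 1))) *)
Definition Tn (T : R -> R -> R) (l : list R) : R := fold_right T 1 l.

Definition tnorm_archimedean (T : R -> R -> R) : Prop :=
  forall x y, 0 < x < 1 -> 0 < y < 1 ->
    exists n : nat, Tn T (repeat x n) < y.

Definition fuzzy_interval (A : R -> R) : Prop :=
  (forall x, unit_int (A x)) /\
  (exists x, A x = 1) /\
  (forall alpha, 0 < alpha <= 1 ->
     exists a b, a <= b /\ forall x, alpha <= A x <-> a <= x <= b).

Definition sumR (l : list R) : R := fold_right Rplus 0 l.

(* the set whose supremum defines Ave_*(A,...,A)(z) with n arguments *)
Definition ave_set (T : R -> R -> R) (A : R -> R) (n : nat) (z : R) (t : R) : Prop :=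
  exists xs : list R, length xs = n /\ sumR xs / INR n = z /\ t = Tn T (map A xs).

(* Hausdorff-metric convergence of sets S n to a (nonempty compact) set K:
   eventually each set lies in the closed eps-neighbourhood of the other. *)
Definition hausdorff_conv (S : nat -> R -> Prop) (K : R -> Prop) : Prop :=
  forall eps, 0 < eps -> exists N : nat, forall n, (N <= n)%nat ->
    (forall x, S n x -> exists y, K y /\ Rabs (x - y) <= eps) /\
    (forall y, K y -> exists x, S n x /\ Rabs (x - y) <= eps).

From Stdlib Require Import Reals Lra Lia List.
Open Scope R_scope.

(* Let [a1, b1] be the core M A = {A = 1}.  The core is always
   contained in the alpha-cut of A_n, witnessed by the constant tuple (y,...,y).
   Conversely, fix eps = 2d > 0 and a mean z > b1 + 2d.  Put c = A (b1 + d) < 1;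
   by the Archimedean property some power T(c,...,c) (k0 factors) is < alpha.
   Any tuple of n values with mean z either has an entry far to the right,
   where A is already below alpha, or -- by a counting argument on its sum --
   at least n d / h of its entries lie beyond b1 + d, where A <= c; for n
   large this count exceeds k0, so T(A(x_1),...,A(x_n)) stays below a fixed
   bound < alpha, and so does the supremum A_n(z).  The left end of the core
   is handled by the same argument applied to the reflected interval
   x |-> A (-x). *)

Definition tpow (T : R -> R -> R) (c : R) (k : nat) : R := Tn T (repeat c k).

Section TNorm.
Variable T : R -> R -> R.
Hypothesis HT : is_tnorm T.

Lemma unit_one : unit_int 1.
Proof. unfold unit_int; lra. Qed.

Lemma T_unit x y : unit_int x -> unit_int y -> unit_int (T x y).
Proof. destruct HT as [H _]; auto. Qed.

Lemma T_comm x y : unit_int x -> unit_int y -> T x y = T y x.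
Proof. destruct HT as [_ [H _]]; auto. Qed.

Lemma T_mono_l x x' y :
  unit_int x -> unit_int x' -> unit_int y -> x <= x' -> T x y <= T x' y.
Proof. destruct HT as [_ [_ [_ [H _]]]]; auto. Qed.

Lemma T_one x : unit_int x -> T x 1 = x.
Proof. destruct HT as [_ [_ [_ [_ H]]]]; auto. Qed.

Lemma T_mono_r x y y' :
  unit_int x -> unit_int y -> unit_int y' -> y <= y' -> T x y <= T x y'.
Proof.
  intros. rewrite (T_comm x y), (T_comm x y'); auto. apply T_mono_l; auto.
Qed.

Lemma T_le_l x y : unit_int x -> unit_int y -> T x y <= x.
Proof.
  intros Hx Hy. rewrite <- (T_one x) at 2; auto.
  apply T_mono_r; auto using unit_one. destruct Hy; lra.
Qed.

Lemma T_le_r x y : unit_int x -> unit_int y -> T x y <= y.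
Proof. intros Hx Hy. rewrite T_comm; auto. apply T_le_l; auto. Qed.

Lemma tpow_unit c k : unit_int c -> unit_int (tpow T c k).
Proof. intros Hc; induction k; simpl. apply unit_one. apply T_unit; auto. Qed.

Lemma tpow_one k : tpow T 1 k = 1.
Proof.
  unfold tpow; induction k as [|k IH]; simpl; [reflexivity|].
  rewrite IH. apply T_one, unit_one.
Qed.

Lemma tpow_antimono c k k' : unit_int c -> (k <= k')%nat -> tpow T c k' <= tpow T c k.
Proof.
  intros Hc H. induction H; [lra|].
  eapply Rle_trans; [|exact IHle]. apply T_le_r; auto using tpow_unit.
Qed.

Lemma tpow_below c alpha :
  tnorm_archimedean T -> unit_int c -> c < 1 -> 0 < alpha <= 1 ->
  exists k, tpow T c k < alpha.
Proof.
  intros HTa Hc Hc1 Ha. unfold unit_int in Hc.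
  destruct (Req_dec c 0) as [->|Hc0].
  - exists 1%nat. unfold tpow; simpl. rewrite T_one; auto using unit_one. lra.
  - destruct (Req_dec alpha 1) as [->|Ha1].
    + exists 1%nat. unfold tpow; simpl. rewrite T_one; [lra | unfold unit_int; lra].
    + apply HTa; lra.
Qed.

End TNorm.

Fixpoint count_ge (t : R) (xs : list R) : nat :=
  match xs with
  | nil => O
  | x :: xs => if Rle_dec t x then S (count_ge t xs) else count_ge t xs
  end.

(* Entries below t + h contribute at most t, or t + h if they are counted. *)
Lemma sumR_le_count t h xs :
  0 <= h -> (forall x, In x xs -> x < t + h) ->
  sumR xs <= INR (length xs) * t + INR (count_ge t xs) * h.
Proof.
  intros Hh H. induction xs as [|x xs IH]; [simpl; lra|].
  assert (Hx : x < t + h) by (apply H; left; reflexivity).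
  assert (IH' := IH (fun y Hy => H y (or_intror Hy))).
  change (sumR (x :: xs)) with (x + sumR xs).
  cbn [length count_ge]. rewrite S_INR.
  destruct (Rle_dec t x); [rewrite S_INR|]; lra.
Qed.

Lemma sumR_repeat y k : sumR (repeat y k) = INR k * y.
Proof.
  induction k as [|k IH]; [simpl; lra|].
  change (sumR (repeat y (S k))) with (y + sumR (repeat y k)).
  rewrite IH, S_INR; lra.
Qed.

Section TNormOfValues.
Variable T : R -> R -> R.
Hypothesis HT : is_tnorm T.
Variable f : R -> R.
Hypothesis Hf : forall x, unit_int (f x).

Lemma Tn_map_unit xs : unit_int (Tn T (map f xs)).
Proof. induction xs; simpl. apply unit_one. apply T_unit; auto. Qed.

Lemma Tn_map_le_in x xs : In x xs -> Tn T (map f xs) <= f x.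
Proof.
  induction xs as [|y xs IH]; simpl; intros H; [contradiction|].
  destruct H as [<-|H].
  - apply T_le_l; auto using Tn_map_unit.
  - eapply Rle_trans; [apply T_le_r; auto using Tn_map_unit | auto].
Qed.

Lemma Tn_map_le_tpow t c xs :
  unit_int c -> (forall x, t <= x -> f x <= c) ->
  Tn T (map f xs) <= tpow T c (count_ge t xs).
Proof.
  intros Hc Hfc. unfold tpow.
  induction xs as [|x xs IH]; simpl; [lra|].
  destruct (Rle_dec t x) as [Hx|Hx]; simpl.
  - apply Rle_trans with (T c (Tn T (map f xs))).
    + apply T_mono_l; auto using Tn_map_unit.
    + apply (T_mono_r T HT); [exact Hc | apply Tn_map_unit | apply (tpow_unit T HT c), Hc | exact IH].
  - eapply Rle_trans; [apply T_le_r; auto using Tn_map_unit | exact IH].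
Qed.

(* Key estimate: a tuple whose mean is at least t + d has either an entry
   beyond t + h (where f <= m) or at least (length * d / h) entries beyond t
   (where f <= c); in both cases T(f x_1, ..., f x_n) is bounded. *)
Lemma Tn_map_large_mean t d h m c k xs :
  0 < h -> unit_int c ->
  (forall x, t + h <= x -> f x <= m) -> (forall x, t <= x -> f x <= c) ->
  INR k * h <= INR (length xs) * d ->
  INR (length xs) * (t + d) <= sumR xs ->
  Tn T (map f xs) <= Rmax m (tpow T c k).
Proof.
  intros Hh Hc Hfm Hfc Hk Hsum.
  destruct (Exists_dec (fun x => t + h <= x) xs (fun x => Rle_dec (t + h) x))
    as [Hfar|Hnear].
  - apply Exists_exists in Hfar as [x [Hin Hx]].
    eapply Rle_trans; [apply Tn_map_le_in, Hin|].
    eapply Rle_trans; [apply Hfm, Hx | apply Rmax_l].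
  - assert (Hbelow : forall x, In x xs -> x < t + h).
    { intros x Hin. apply Rnot_le_lt. intros Hx.
      apply Hnear, Exists_exists. exists x; auto. }
    pose proof (sumR_le_count t h xs (Rlt_le _ _ Hh) Hbelow) as Hcount.
    assert (Hmany : (k <= count_ge t xs)%nat).
    { apply INR_le, (Rmult_le_reg_r h); lra. }
    eapply Rle_trans; [apply (Tn_map_le_tpow t c xs Hc Hfc)|].
    eapply Rle_trans; [apply (tpow_antimono T HT c k _ Hc Hmany) | apply Rmax_r].
Qed.

End TNormOfValues.

(* To the right of a core point, a fuzzy interval is non-increasing
   (its cuts are intervals containing the core). *)
Lemma fuzzy_interval_tail A b1 u x :
  fuzzy_interval A -> 1 <= A b1 -> b1 <= u -> u <= x -> A x <= A u.
Proof.
  intros [Hunit [_ Hcut]] Hb Hu Hx.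
  destruct (Rle_dec (A x) (A u)) as [Hle|Hgt]; [exact Hle|exfalso].
  pose proof (Hunit u); pose proof (Hunit x); unfold unit_int in *.
  destruct (Hcut (A x) ltac:(lra)) as [a [b [Hab Hi]]].
  destruct (proj1 (Hi x) ltac:(lra)). destruct (proj1 (Hi b1) ltac:(lra)).
  assert (A x <= A u) by (apply Hi; lra). lra.
Qed.

Lemma fuzzy_interval_reflect A :
  fuzzy_interval A -> fuzzy_interval (fun x => A (- x)).
Proof.
  intros [Hunit [[x1 Hx1] Hcut]]. split; [|split].
  - intros x; apply Hunit.
  - exists (- x1). rewrite Ropp_involutive; exact Hx1.
  - intros alpha Ha. destruct (Hcut alpha Ha) as [a [b [Hab Hi]]].
    exists (- b), (- a). split; [lra|].
    intros x. rewrite Hi. lra.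
Qed.

Lemma sumR_opp xs : sumR (map Ropp xs) = - sumR xs.
Proof.
  induction xs as [|x xs IH]; [simpl; lra|].
  change (- x + sumR (map Ropp xs) = - (x + sumR xs)). rewrite IH; lra.
Qed.

Lemma ave_set_reflect T A n z t :
  ave_set T (fun x => A (- x)) n z t <-> ave_set T A n (- z) t.
Proof.
  split; intros [xs [Hlen [Hmean ->]]]; exists (map Ropp xs);
    rewrite length_map, sumR_opp, map_map; (split; [exact Hlen|]).
  - split; [rewrite <- Hmean; unfold Rdiv; ring | reflexivity].
  - split.
    + rewrite <- (Ropp_involutive z), <- Hmean; unfold Rdiv; ring.
    + f_equal; apply map_ext; intros x; rewrite Ropp_involutive; reflexivity.
Qed.

Lemma is_lub_ext (E F : R -> Prop) l :
  (forall t, E t <-> F t) -> is_lub E l -> is_lub F l.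
Proof.
  intros HEF [Hub Hleast]. split.
  - intros t Ht; apply Hub, HEF, Ht.
  - intros b Hb; apply Hleast; intros t Ht; apply Hb, HEF, Ht.
Qed.

Lemma exists_nat_mult_ge (k : nat) (h d : R) : 0 < d ->
  exists N : nat, INR k * h <= INR N * d.
Proof.
  intros Hd. destruct (INR_unbounded (INR k * h / d)) as [N HN].
  exists N. apply Rmult_gt_compat_r with (r := d) in HN; auto.
  unfold Rdiv in HN. rewrite Rmult_assoc, Rinv_l in HN; lra.
Qed.

Lemma cut_right_bound T A (An : nat -> R -> R) :
  is_tnorm T -> tnorm_archimedean T -> fuzzy_interval A ->
  (forall n z, (1 <= n)%nat -> is_lub (ave_set T A n z) (An n z)) ->
  forall b1, 1 <= A b1 -> (forall x, 1 <= A x -> x <= b1) ->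
  forall alpha eps, 0 < alpha <= 1 -> 0 < eps ->
  exists N : nat, forall n, (N <= n)%nat ->
    forall z, alpha <= An (S n) z -> z <= b1 + eps.
Proof.
  intros HT HTa HA HAn b1 Hb1 Hcore alpha eps Halpha Heps.
  pose proof (proj1 HA) as Hunit.
  set (d := eps / 2).
  (* Beyond b1 + d the values of A stay below c < 1 ... *)
  set (c := A (b1 + d)).
  assert (Hc1 : c < 1).
  { apply Rnot_le_lt; intros Hc. pose proof (Hcore _ Hc). unfold d in *; lra. }
  destruct (tpow_below T HT c alpha HTa (Hunit _) Hc1 Halpha) as [k0 Hk0].
  (* ... and beyond the alpha-cut [a, b] they are below alpha. *)
  destruct (proj2 (proj2 HA) alpha Halpha) as [a [b [Hab Hcut]]].
  set (h := Rmax (b - b1) 0 + 1).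
  assert (Hh : 0 < h) by (unfold h; pose proof (Rmax_r (b - b1) 0); lra).
  set (m := A (b1 + d + h)).
  assert (Hm : m < alpha).
  { apply Rnot_le_lt; intros Hm. apply Hcut in Hm.
    pose proof (Rmax_l (b - b1) 0). unfold h, d in *; lra. }
  destruct (exists_nat_mult_ge k0 h d ltac:(unfold d; lra)) as [N HN].
  exists N. intros n Hn z Hz.
  apply Rnot_lt_le; intros Hfar.
  assert (Hbound : is_upper_bound (ave_set T A (S n) z) (Rmax m (tpow T c k0))).
  { intros t [xs [Hlen [Hmean ->]]].
    assert (HSn : 0 < INR (S n)) by (apply lt_0_INR; lia).
    apply (Tn_map_large_mean T HT A Hunit (b1 + d) d h); [exact Hh | apply Hunit | | | |].
    - intros x Hx. apply (fuzzy_interval_tail A b1); auto; unfold d in *; lra.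
    - intros x Hx. apply (fuzzy_interval_tail A b1); auto; unfold d in *; lra.
    - rewrite Hlen. pose proof (le_INR _ _ (le_S _ _ Hn)).
      apply Rle_trans with (INR N * d); [exact HN|].
      apply Rmult_le_compat_r; unfold d in *; lra.
    - rewrite Hlen. replace (sumR xs) with (z * INR (S n))
        by (rewrite <- Hmean; field; lra).
      rewrite (Rmult_comm (INR (S n))). apply Rmult_le_compat_r; unfold d in *; lra. }
  pose proof (proj2 (HAn (S n) z ltac:(lia)) _ Hbound).
  pose proof (Rmax_lub_lt _ _ _ Hm Hk0). lra.
Qed.

(* Left end of the cuts, obtained from the right end for the mirrored
   fuzzy interval x |-> A (-x), whose averages are z |-> A_n (-z). *)
Lemma cut_left_bound T A (An : nat -> R -> R) :
  is_tnorm T -> tnorm_archimedean T -> fuzzy_interval A ->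
  (forall n z, (1 <= n)%nat -> is_lub (ave_set T A n z) (An n z)) ->
  forall a1, 1 <= A a1 -> (forall x, 1 <= A x -> a1 <= x) ->
  forall alpha eps, 0 < alpha <= 1 -> 0 < eps ->
  exists N : nat, forall n, (N <= n)%nat ->
    forall z, alpha <= An (S n) z -> a1 - eps <= z.
Proof.
  intros HT HTa HA HAn a1 Ha1 Hcore alpha eps Halpha Heps.
  assert (HAn' : forall n z, (1 <= n)%nat ->
            is_lub (ave_set T (fun x => A (- x)) n z) (An n (- z))).
  { intros n z Hn. apply (is_lub_ext (ave_set T A n (- z))); [|auto].
    intros t; symmetry; apply ave_set_reflect. }
  destruct (cut_right_bound T (fun x => A (- x)) (fun n z => An n (- z))
              HT HTa (fuzzy_interval_reflect A HA) HAn' (- a1)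
              ltac:(cbv beta; rewrite Ropp_involutive; exact Ha1)
              ltac:(intros x Hx; pose proof (Hcore _ Hx); lra)
              alpha eps Halpha Heps) as [N HN].
  exists N. intros n Hn z Hz.
  assert (Hz' : alpha <= An (S n) (- - z)) by (rewrite Ropp_involutive; exact Hz).
  pose proof (HN n Hn (- z) Hz'). lra.
Qed.

(* The core is contained in every cut of A_n: use the constant tuple. *)
Lemma core_in_cut T A (An : nat -> R -> R) n y :
  is_tnorm T -> fuzzy_interval A ->
  is_lub (ave_set T A (S n) y) (An (S n) y) -> 1 <= A y -> 1 <= An (S n) y.
Proof.
  intros HT [Hunit _] HAn Hy.
  assert (Ay : A y = 1) by (destruct (Hunit y); lra).
  apply (proj1 HAn). exists (repeat y (S n)). split; [apply repeat_length|].
  split.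
  - rewrite sumR_repeat. field. apply not_0_INR; lia.
  - rewrite map_repeat, Ay. symmetry; apply (tpow_one T HT).
Qed.

Lemma near_interval a b z eps :
  0 <= eps -> a <= b -> a - eps <= z -> z <= b + eps ->
  exists y, a <= y <= b /\ Rabs (z - y) <= eps.
Proof.
  intros Heps Hab Hl Hr.
  destruct (Rlt_le_dec z a) as [Hza|Hza]; [exists a | destruct (Rlt_le_dec b z) as [Hbz|Hbz];
    [exists b | exists z]]; (split; [split; lra | apply Rabs_le; split; lra]).
Qed.

Theorem mainTheorem9 (T : R -> R -> R) (A : R -> R) (An : nat -> R -> R)
  (HT : is_tnorm T) (HTc : tnorm_continuous T) (HTa : tnorm_archimedean T)
  (HA : fuzzy_interval A)
  (HAn : forall n z, (1 <= n)%nat -> is_lub (ave_set T A n z) (An n z)) :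
  forall alpha, 0 < alpha <= 1 ->
    hausdorff_conv (fun n z => alpha <= An (S n) z) (fun y => 1 <= A y).
Proof.
  intros alpha Halpha eps Heps.
  destruct (proj2 (proj2 HA) 1 ltac:(lra)) as [a1 [b1 [Hab Hcore]]].
  destruct (cut_right_bound T A An HT HTa HA HAn b1
              ltac:(apply Hcore; lra) ltac:(intros x Hx; apply Hcore in Hx; lra)
              alpha eps Halpha Heps) as [NR HR].
  destruct (cut_left_bound T A An HT HTa HA HAn a1
              ltac:(apply Hcore; lra) ltac:(intros x Hx; apply Hcore in Hx; lra)
              alpha eps Halpha Heps) as [NL HL].
  exists (Nat.max NR NL). intros n Hn. split.
  - intros z Hz.
    destruct (near_interval a1 b1 z eps (Rlt_le _ _ Heps) Hab (HL n ltac:(lia) z Hz) (HR n ltac:(lia) z Hz))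
      as [y [Hy Hzy]].
    exists y. split; [apply Hcore; exact Hy | exact Hzy].
  - intros y Hy. exists y. split.
    + apply Rle_trans with 1; [lra|].
      apply (core_in_cut T A An n y HT HA (HAn (S n) y ltac:(lia)) Hy).
    + rewrite Rminus_diag, Rabs_R0; lra.
Qed.
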